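(* Let $\ell\ge2$, let $\mathbf{a}=(a_1,\ldots,a_\ell)\in\mathbf{Z}^\ell$ with $\sum a_j=0$, and let $\lambda=\pi_\ell(\mathbf{a})$. Let $i$ be the largest index with $a_i=\max\{a_1,\ldots,a_\ell\}$. Then \[ \lambda_1=(a_i-1)\ell+i \] and also \[ \lambda_1=\sum_{j=1}^{i-1}(a_i-a_j)+\sum_{j=i+1}^{\ell}(a_i-a_j-1). \]
   Context: For $\mathbf{a}\in\mathbf{Z}^\ell$ with $\sum a_j=0$, let $X(\mathbf{a})=\{r\ell+(j-1):1\le j\le\ell,\ r\in\mathbf{Z},\ r\le a_j\}$ and let $\pi_\ell(\mathbf{a})$ be the partition whose nonzero parts (in weakly decreasing order) are the positive values among $\#\{y\in\mathbf{Z}\setminus X(\mathbf{a}):y<x\}$, $x\in X(\mathbf{a})$. ($\pi_\ell$ is a bijection onto the set of $\ell$-cores, i.e. partitions none of whose hook lengths is divisible by $\ell$.) $\lambda_1$ denotes the first (largest) part, taken to be $0$ for the empty partition. *)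

From mathcomp Require Import all_boot all_order all_algebra.
Set Implicit Arguments. Unset Strict Implicit. Unset Printing Implicit Defensive.
Import Order.TTheory GRing.Theory Num.Theory.
Local Open Scope ring_scope.

(* Indices j = 1..l of the paper are represented by j' : 'I_l with j = j'+1,
   so the paper's element  r*l + (j-1)  is  r*l + j'. *)
Section Cores.
Variable l : nat.
Variable a : 'I_l -> int.

(* x \in X(a)  iff  x = r*l + j' for some j' : 'I_l and integer r <= a j'
   (r is then (x - j') / l). *)
Definition inX (x : int) : bool :=
  [exists j : 'I_l, ((l%:Z %| (x - j%:Z))%Z) && (((x - j%:Z) %/ l%:Z)%Z <= a j)].

(* B bounds |a_j|; every y < -B*l lies in X(a), and every x in X(a) is < B*l + l. *)
Definition Bnd : int := \sum_(j < l) `|a j|.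
Definition lowB : int := - (Bnd * l%:Z).
Definition uppB : int := Bnd * l%:Z + l%:Z.

Definition window (L x : int) : seq int :=
  [seq L + k%:Z | k <- iota 0 `|x - L|%N].

(* #{ y in Z \ X(a) : y < x }  (all y < lowB are in X(a), so counting
   from lowB loses nothing) *)
Definition gaps (x : int) : nat := count (fun y => ~~ inX y) (window lowB x).

(* pi_l(a): the positive values gaps x, x in X(a) (with multiplicity),
   in weakly decreasing order.  Only x in [lowB, uppB) can be in X(a) with
   gaps x > 0. *)
Definition pi_l : seq nat :=
  sort geq [seq gaps x | x <- window lowB uppB & inX x && (0 < gaps x)%N].

End Cores.

(* first (largest) part, 0 for the empty partition *)
Definition lambda1 (p : seq nat) : nat := head 0%N p.

From mathcomp Require Import all_boot all_order all_algebra.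
From mathcomp Require Import zify ring.
Import Order.TTheory GRing.Theory Num.Theory.
Set Implicit Arguments.
Unset Strict Implicit.
Unset Printing Implicit Defensive.
Local Open Scope ring_scope.

(* The largest element of X(a) is m = a_i l + (i-1): an element r l + (j-1)
   has r <= a_j <= a_i, and r < a_i when j > i.  Since the gap count
   x |-> #{y notin X(a) : y < x} is nondecreasing, lambda_1 is the number of
   gaps below m.  Raising all a_j by a common constant turns them into the
   nonnegative bead heights of an l-runner abacus; counting row by row, runner
   j contributes a_i - a_j gaps below m if j < i, a_i - a_j - 1 if j > i, and
   none if j = i.  Summing, with sum_j a_j = 0, gives (a_i - 1) l + i. *)

Section Abacus.
Local Open Scope nat_scope.
Variables (n : nat) (b : 'I_n.+1 -> nat).
Local Notation l := n.+1.

(* An l-runner abacus whose runner j carries beads at heights 0, ..., b j;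
   position k sits on runner k %% l at height k %/ l. *)
Definition abacus_gap (k : nat) : bool := b (inord (k %% l)) < k %/ l.

Lemma count_abacus_gap_row Q m : m <= l ->
  count abacus_gap (iota (Q * l) m) = \sum_(j < l) (j < m) * (b j < Q).
Proof.
move=> le_ml.
have gap_row j : j < m -> abacus_gap (Q * l + j) = (b (inord j) < Q).
  move=> lt_jm; have lt_jl := leq_trans lt_jm le_ml.
  by rewrite /abacus_gap modnMDl modn_small // divnMDl // divn_small // addn0.
rewrite -[Q * l]addn0 iotaDl count_map.
rewrite (@eq_in_count _ _ (fun j => b (inord j) < Q)); last first.
  by move=> j; rewrite mem_iota => /andP[_ /gap_row].
rewrite -sum1_count -[m in iota 0 m](subn0 m).
rewrite (big_nat_widen _ _ _ _ _ le_ml) big_mkord big_mkcond /=.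
by apply: eq_bigr => j _; rewrite inord_val andbC; case: (j < m); case: (b j < Q).
Qed.

Lemma count_abacus_gap_rows Q :
  count abacus_gap (iota 0 (Q * l)) = \sum_(j < l) (Q - (b j).+1).
Proof.
elim: Q => [|Q IHQ]; first by rewrite big1.
rewrite mulSn addnC iotaD count_cat IHQ count_abacus_gap_row // -big_split /=.
by apply: eq_bigr => j _; rewrite ltn_ord mul1n; case: ltnP; lia.
Qed.

Lemma count_abacus_gap Q m : m <= l ->
  count abacus_gap (iota 0 (Q * l + m)) =
  \sum_(j < l) ((Q - (b j).+1) + (j < m) * (b j < Q)).
Proof.
move=> le_ml.
by rewrite iotaD count_cat count_abacus_gap_rows count_abacus_gap_row // big_split.
Qed.

End Abacus.

Lemma head_sort_geq (s : seq nat) m :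
  {in s, forall v, v <= m}%N -> m \in s -> head 0%N (sort geq s) = m.
Proof.
move=> le_sm sm.
have : m \in sort geq s by rewrite mem_sort.
have : sorted geq (sort geq s) := sort_sorted (fun x y => leq_total y x) s.
have : {subset sort geq s <= s} by move=> v; rewrite mem_sort.
case: (sort geq s) => [|h t] //= sub_s path_ht.
rewrite in_cons => /predU1P[<- // | mt].
have le_hm := le_sm _ (sub_s _ (mem_head _ _)).
have /allP/(_ _ mt) le_mh := order_path_min (rev_trans leq_trans) path_ht.
by apply/eqP; rewrite eqn_leq le_hm le_mh.
Qed.

Lemma mem_window L x y : L <= x -> (y \in window L x) = (L <= y < x).
Proof.
move=> le_Lx; apply/mapP/idP => [[k] | /andP[le_Ly lt_yx]].
- by rewrite mem_iota => /andP[_ lt_k] ->; apply/andP; split; lia.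
- by exists `|y - L|%N; [rewrite mem_iota; apply/andP; split | ]; lia.
Qed.

Lemma ord_eq_of_dvdz l (j k : 'I_l) : (l%:Z %| k%:Z - j%:Z)%Z -> j = k.
Proof.
have := ltn_ord j; have := ltn_ord k => lt_kl lt_jl /dvdzP[c eq_c].
have c0 : c = 0 by nia.
by apply: ord_inj; move: eq_c; rewrite c0 mul0r; lia.
Qed.

Section Cores.
Variables (n : nat) (a : 'I_n.+1 -> int).
Local Notation l := n.+1.

Lemma norm_le_Bnd j : `|a j| <= Bnd a.
Proof. by rewrite /Bnd (bigD1 j) //= lerDl sumr_ge0. Qed.

Lemma inX_decomp q (r : 'I_l) : inX a (q * l%:Z + r%:Z) = (q <= a r).
Proof.
apply/existsP/idP => [[j /andP[dvd_j le_j]] | le_qa]; last first.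
  by exists r; rewrite addrK dvdz_mull //= mulzK.
have eq_jr : j = r.
  apply: ord_eq_of_dvdz; rewrite -(rpredDl _ (dvdz_mull q (dvdzz l%:Z))).
  by rewrite addrA.
by move: le_j; rewrite eq_jr addrK mulzK.
Qed.

Definition height (j : 'I_l) : nat := absz (a j + Bnd a).

Lemma heightE j : (height j)%:Z = a j + Bnd a.
Proof. by have := norm_le_Bnd j; rewrite /height ler_norml; lia. Qed.

Lemma abacus_gap_height k : abacus_gap height k = ~~ inX a (lowB a + k%:Z).
Proof.
set r : 'I_l := inord (k %% l).
have eq_r : r = (k %% l)%N :> nat by rewrite inordK // ltn_mod.
have -> : lowB a + k%:Z = ((k %/ l)%N%:Z - Bnd a) * l%:Z + r%:Z.
  by rewrite eq_r {1}(divn_eq k l) PoszD PoszM /lowB; ring.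
by rewrite inX_decomp /abacus_gap -/r -ltNge -ltz_nat heightE ltrBrDr.
Qed.

Lemma gaps_abacus x : gaps a x = count (abacus_gap height) (iota 0 `|x - lowB a|).
Proof. by rewrite /gaps /window count_map; apply: eq_count => k; rewrite abacus_gap_height. Qed.

Lemma leq_gaps x y : lowB a <= x -> x <= y -> (gaps a x <= gaps a y)%N.
Proof.
move=> le_Lx le_xy; rewrite !gaps_abacus.
have -> : `|y - lowB a|%N = (`|x - lowB a| + `|y - x|)%N by lia.
by rewrite iotaD count_cat leq_addr.
Qed.

End Cores.

Section LargestPart.
Variables (n : nat) (a : 'I_n.+1 -> int) (i : 'I_n.+1).
Local Notation l := n.+1.
Hypothesis le_a_i : forall j, a j <= a i.
Hypothesis lt_a_i : forall j : 'I_l, (i < j)%N -> a j < a i.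

Definition maxX : int := a i * l%:Z + i%:Z.

Lemma inX_le_maxX x : inX a x -> x <= maxX.
Proof.
case/existsP=> j /andP[/dvdzP[c eq_c] le_c].
rewrite eq_c mulzK // in le_c.
have -> : x = c * l%:Z + j%:Z by rewrite -eq_c; ring.
have := ltn_ord j; have := ltn_ord i; rewrite /maxX => lt_il lt_jl.
case: (ltnP i j) => [lt_ij | le_ji].
- have := lt_a_i lt_ij; nia.
- have := le_a_i j; nia.
Qed.

Lemma inX_maxX : inX a maxX.
Proof. by rewrite inX_decomp. Qed.

Lemma maxX_window : lowB a <= maxX < uppB a.
Proof.
have := norm_le_Bnd a i; have := ltn_ord i.
rewrite ler_norml /lowB /uppB /maxX => lt_il /andP[le_Ba le_aB].
by apply/andP; split; nia.
Qed.

Lemma lambda1_maxX : lambda1 (pi_l a) = gaps a maxX.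
Proof.
have /andP[le_L_max lt_max_U] := maxX_window.
have le_LU : lowB a <= uppB a by apply: le_trans (ltW lt_max_U).
rewrite /lambda1 /pi_l; set s := [seq _ | _ <- _].
have s_le : {in s, forall v, 0 < v <= gaps a maxX}%N.
  move=> v /mapP[x]; rewrite mem_filter mem_window //.
  move=> /andP[/andP[Xx pos_x] /andP[le_Lx _]] ->; rewrite pos_x /=.
  exact: leq_gaps (inX_le_maxX Xx).
have [gaps0 | gaps_gt0] := posnP (gaps a maxX).
- case: s s_le => [|v t] //= /(_ v (mem_head _ _)).
  by rewrite gaps0; case: v.
- apply: head_sort_geq => [v /s_le /andP[] //|].
  apply/mapP; exists maxX => //.
  by rewrite mem_filter mem_window // inX_maxX gaps_gt0 le_L_max.
Qed.

Lemma gaps_maxX :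
  gaps a maxX = count (abacus_gap (height a)) (iota 0 (height a i * l + i)).
Proof.
have /andP[le_L_max _] := maxX_window.
rewrite gaps_abacus; congr (count _ (iota 0 _)); apply/eqP.
rewrite -eqz_nat PoszD PoszM heightE abszE ger0_norm ?subr_ge0 //.
by apply/eqP; rewrite /maxX /lowB; ring.
Qed.

Lemma abacus_column j :
  ((height a i - (height a j).+1) + (j < i)%N * (height a j < height a i)%N)%N%:Z
  = a i - a j - (i < j)%N%:Z.
Proof.
have := heightE a j; have := heightE a i; have := le_a_i j.
case: (ltngtP j i) => [lt_ji | lt_ij | /ord_inj ->].
- by case: ltnP => /=; lia.
- by have := lt_a_i lt_ij; case: ltnP => /=; lia.
- by case: ltnP => /=; lia.
Qed.

Lemma lambda1_sum : (lambda1 (pi_l a))%:Z = \sum_(j < l) (a i - a j - (i < j)%N%:Z).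
Proof.
rewrite lambda1_maxX gaps_maxX count_abacus_gap 1?ltnW //.
rewrite (big_morph Posz PoszD (erefl _)).
by apply: eq_bigr => j _; rewrite abacus_column.
Qed.

End LargestPart.

Lemma sum_split_at l (a : 'I_l -> int) (i : 'I_l) :
  \sum_(j < l) (a i - a j - (i < j)%N%:Z) =
  \sum_(j < l | (j < i)%N) (a i - a j) + \sum_(j < l | (i < j)%N) (a i - a j - 1).
Proof.
rewrite (big_mkcond (fun j : 'I_l => (j < i)%N)) (big_mkcond (fun j : 'I_l => (i < j)%N)).
rewrite -big_split; apply: eq_bigr => j _.
by case: (ltngtP j i) => [| | /ord_inj ->] /=; lia.
Qed.

Lemma sum_ltn_ord l (k : 'I_l) : (\sum_(j < l) (k < j) = l - k.+1)%N.
Proof.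
rewrite -(big_mkord xpredT (fun j => nat_of_bool (k < j)%N)).
rewrite (@big_cat_nat _ _ _ k.+1) //= big1_seq ?add0n; last first.
  by move=> j /andP[_]; rewrite mem_index_iota ltnS => /andP[_ /leq_gtF ->].
rewrite (eq_big_seq (fun _ => 1%N)) ?sum_nat_const_nat ?muln1 //.
by move=> j; rewrite mem_index_iota => /andP[-> _].
Qed.

Lemma sum_closed_form l (a : 'I_l -> int) (i : 'I_l) : \sum_(j < l) a j = 0 ->
  \sum_(j < l) (a i - a j - (i < j)%N%:Z) = (a i - 1) * l%:Z + (i.+1)%:Z.
Proof.
move=> sum_a0; have lt_il := ltn_ord i.
rewrite !sumrB sum_a0 sumr_const card_ord -mulr_natr natz.
rewrite -(big_morph Posz PoszD (erefl _)) sum_ltn_ord -subzn //; ring.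
Qed.

Theorem mainTheorem7 (l : nat) (a : 'I_l -> int) (i : 'I_l) :
  (2 <= l)%N ->
  \sum_(j < l) a j = 0 ->
  (forall j : 'I_l, a j <= a i) ->
  (forall j : 'I_l, (i < j)%N -> a j < a i) ->
  (lambda1 (pi_l a))%:Z = (a i - 1) * l%:Z + (i.+1)%:Z /\
  (lambda1 (pi_l a))%:Z =
    \sum_(j < l | (j < i)%N) (a i - a j) + \sum_(j < l | (i < j)%N) (a i - a j - 1).
Proof.
(* Only [0 < l], which [i : 'I_l] already provides, is needed. *)
case: l a i => [|n] a i; first by case: i.
move=> _ sum_a0 le_a_i lt_a_i.
rewrite (lambda1_sum le_a_i lt_a_i).
by split; [exact: sum_closed_form | exact: sum_split_at].
Qed.
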